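(* Let $\Pi$ be an $\mathit{LP}^{\mathit{MLN}}$ program such that every formula in $\mathrm{soft}(\Pi)$ is a soft integrity constraint, i.e. has the form $w : \neg F$ for a real number $w$ and a propositional formula $F$. Then $\mathrm{SSM}'(\Pi) = \mathrm{SM}(\overline{\mathrm{hard}(\Pi)})$.
   Context: Fix a finite set of propositional atoms; an interpretation is a set $X$ of atoms. For a set $\Gamma$ of propositional formulas, the reduct $\Gamma^X$ is obtained by replacing every maximal subformula of each formula of $\Gamma$ not satisfied by $X$ by $\bot$; $X$ is a stable model of $\Gamma$ if $X$ is a minimal (w.r.t. set inclusion) model of $\Gamma^X$ (general stable model semantics of Ferraris). $\mathrm{SM}(\Gamma)$ denotes the set of stable models of $\Gamma$. An $\mathit{LP}^{\mathit{MLN}}$ program $\Pi$ is a finite set of weighted formulas $w : F$, where $F$ is a propositional formula and $w$ is either a real number (the formula is then called soft) or the symbol $\alpha$ denoting infinite weight (the formula is then called hard). $\mathrm{soft}(\Pi)$ and $\mathrm{hard}(\Pi)$ denote the sets of soft and hard weighted formulas of $\Pi$. For a set $\Sigma$ of weighted formulas, $\overline{\Sigma}$ denotes the set of formulas obtained by dropping the weights, and $\Sigma_X$ denotes the set of those $w : F \in \Sigma$ with $X \models F$. $\mathrm{SSM}'(\Pi)$ is the set of interpretations $X$ such that $X$ is a stable model of $\overline{\Pi_X}$ and $X$ satisfies $\overline{\mathrm{hard}(\Pi)}$. *)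

From mathcomp Require Import all_boot.
From Stdlib Require Import Reals.

Set Implicit Arguments.
Unset Strict Implicit.
Unset Printing Implicit Defensive.

(* Propositional formulas over a finite set of atoms A (Ferraris' syntax:
   bottom, atoms, conjunction, disjunction, implication; negation is F -> bot). *)
Inductive formula (A : finType) : Type :=
| FBot
| FAtom of A
| FAnd of formula A & formula A
| FOr of formula A & formula A
| FImp of formula A & formula A.

Arguments FBot {A}.

Definition FNeg (A : finType) (F : formula A) : formula A := FImp F FBot.

Fixpoint sat (A : finType) (X : {set A}) (F : formula A) : bool :=
  match F with
  | FBot => false
  | FAtom p => p \in X
  | FAnd F1 F2 => sat X F1 && sat X F2
  | FOr F1 F2 => sat X F1 || sat X F2
  | FImp F1 F2 => sat X F1 ==> sat X F2
  end.

Definition sat_all (A : finType) (X : {set A}) (G : seq (formula A)) : bool :=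
  all (sat X) G.

Fixpoint reduct (A : finType) (X : {set A}) (F : formula A) : formula A :=
  if ~~ sat X F then FBot else
  match F with
  | FBot => FBot
  | FAtom p => FAtom p
  | FAnd F1 F2 => FAnd (reduct X F1) (reduct X F2)
  | FOr F1 F2 => FOr (reduct X F1) (reduct X F2)
  | FImp F1 F2 => FImp (reduct X F1) (reduct X F2)
  end.

Definition reduct_set (A : finType) (X : {set A}) (G : seq (formula A))
  : seq (formula A) := map (reduct X) G.

Definition stable_model (A : finType) (G : seq (formula A)) (X : {set A}) : Prop :=
  sat_all X (reduct_set X G) /\
  forall Y : {set A}, Y \proper X -> ~~ sat_all Y (reduct_set X G).

Definition SM (A : finType) (G : seq (formula A)) : {set A} -> Prop :=
  stable_model G.

(* LP^MLN programs: weights are Some w (soft, w real) or None (alpha, hard). *)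
Definition weight := option R.
Definition wformula (A : finType) := (weight * formula A)%type.
Definition program (A : finType) := seq (wformula A).

Definition is_hard (A : finType) (wf : wformula A) : bool :=
  if wf.1 is None then true else false.
Definition is_soft (A : finType) (wf : wformula A) : bool := ~~ is_hard wf.

Definition hard (A : finType) (P : program A) : program A := filter (@is_hard A) P.
Definition soft (A : finType) (P : program A) : program A := filter (@is_soft A) P.

Definition unweight (A : finType) (S : program A) : seq (formula A) :=
  map (fun wf => wf.2) S.

Definition sat_part (A : finType) (S : program A) (X : {set A}) : program A :=
  filter (fun wf => sat X wf.2) S.

Definition SSM' (A : finType) (P : program A) : {set A} -> Prop :=
  fun X => stable_model (unweight (sat_part P X)) X /\
           sat_all X (unweight (hard P)).

Definition soft_integrity_constraint (A : finType) (wf : wformula A) : Prop :=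
  exists (w : R) (F : formula A), wf = (Some w, FNeg F).

From mathcomp Require Import all_boot.
From Stdlib Require Import Reals.

Set Implicit Arguments.
Unset Strict Implicit.
Unset Printing Implicit Defensive.

(* If X satisfies the hard formulas, then Pi_X consists of hard(Pi) together with
   the soft constraints ~F satisfied by X.  For such a constraint X does not
   satisfy F, so its reduct w.r.t. X is bot -> bot, a tautology.  Hence the
   reducts of Pi_X and of hard(Pi) w.r.t. X have the same models, and X is a
   minimal model of one iff it is of the other.  Conversely every stable model
   of hard(Pi) satisfies hard(Pi). *)

Section Reduct.

Variables (A : finType) (X : {set A}).

Lemma sat_reduct (F : formula A) : sat X (reduct X F) = sat X F.
Proof.
elim: F => [|p|F1 IH1 F2 IH2|F1 IH1 F2 IH2|F1 IH1 F2 IH2] //=.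
all: case: ifP => [/negbTE -> //|_] /=.
all: by rewrite ?IH1 ?IH2.
Qed.

Lemma reduct_unsat (F : formula A) : ~~ sat X F -> reduct X F = FBot.
Proof. by case: F => [|p|F1 F2|F1 F2|F1 F2] //= ->. Qed.

Lemma sat_reduct_neg (F : formula A) (Y : {set A}) :
  sat X (FNeg F) -> sat Y (reduct X (FNeg F)).
Proof. by rewrite /= implybF => satXnF; rewrite satXnF /= reduct_unsat. Qed.

Lemma sat_all_reduct (G : seq (formula A)) :
  sat_all X (reduct_set X G) = sat_all X G.
Proof.
by rewrite /sat_all /reduct_set all_map; apply: eq_all => F; exact: sat_reduct.
Qed.

End Reduct.

Lemma stable_model_sat_all (A : finType) (G : seq (formula A)) (X : {set A}) :
  stable_model G X -> sat_all X G.
Proof. by case; rewrite sat_all_reduct. Qed.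

Lemma stable_model_eq_reduct (A : finType) (G G' : seq (formula A)) (X : {set A}) :
  (forall Y, sat_all Y (reduct_set X G) = sat_all Y (reduct_set X G')) ->
  stable_model G X <-> stable_model G' X.
Proof.
move=> eqGG'; split=> -[satX minX]; split=> [|Y /minX].
- by rewrite -eqGG'.
- by rewrite eqGG'.
- by rewrite eqGG'.
- by rewrite -eqGG'.
Qed.

Lemma sat_all_reduct_sat_part_hard (A : finType) (P : program A) (X Y : {set A}) :
  (forall wf, List.In wf (soft P) -> soft_integrity_constraint wf) ->
  sat_all X (unweight (hard P)) ->
  sat_all Y (reduct_set X (unweight (sat_part P X))) =
  sat_all Y (reduct_set X (unweight (hard P))).
Proof.
rewrite /sat_all /reduct_set /unweight /sat_part /hard /soft !all_map !all_filter.
elim: P => [|[[w|] F] P IH] //= softP.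
- have [_ [G [_ ->]]] := softP (Some w, F) (or_introl erefl).
  have -> : sat X (FNeg G) ==> sat Y (reduct X (FNeg G)).
    exact/implyP/sat_reduct_neg.
  by apply: IH => wf inP; apply: softP; right.
- by case/andP=> /= -> /IH ->.
Qed.

Theorem proposition1 (A : finType) (P : program A) :
  (forall wf, List.In wf (soft P) -> soft_integrity_constraint wf) ->
  forall X : {set A}, SSM' P X <-> SM (unweight (hard P)) X.
Proof.
move=> softP X; rewrite /SSM' /SM.
have reductE : sat_all X (unweight (hard P)) ->
    stable_model (unweight (sat_part P X)) X <-> stable_model (unweight (hard P)) X.
  move=> satXhard; apply: stable_model_eq_reduct => Y.
  exact: sat_all_reduct_sat_part_hard.
split=> [[stableX satXhard] | stableX]; first by rewrite -reductE.
have satXhard := stable_model_sat_all stableX.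
by split=> //; rewrite reductE.
Qed.
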